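(* Let $j>0$ and $R\in(0,1)$. For every $\delta>0$ small enough there is a unique function $\rho:[0,1]\to[0,\infty)$, continuous on $[0,R]$ and vanishing on $(R,1]$, such that $u:=j\delta D_0+\rho$ satisfies $$S^{(\delta,-)}_\delta(u)=u,$$ with cut point $R^{(\delta)}_{G^{\rm neum}_\delta*u}=R$. Moreover, for fixed $\delta$, $\rho$ is (pointwise) an increasing function of $R$.
   Context: $D_0$ is the Dirac delta at $0$. $G^{\rm neum}_t(r,r')$, $r,r'\in[0,1]$, is the Green function of $\partial_t\rho=\frac12\partial_r^2\rho$ on $[0,1]$ with Neumann boundary conditions: $G^{\rm neum}_t(r,r')=\sum_kG_t(r,r'_k)$, $G_t(r,r')=e^{-(r-r')^2/2t}/\sqrt{2\pi t}$, where $r'_k$ ranges over the images of $r'$ under repeated reflections of $[0,1]$ about its endpoints. For $u=cD_0+\rho$ ($c\ge0$, $\rho\in L^\infty([0,1],\mathbb R_+)$), $(G^{\rm neum}_\delta*u)(r)=cG^{\rm neum}_\delta(r,0)+\int_0^1G^{\rm neum}_\delta(r,r')\rho(r')dr'$. For a nonnegative $u$ with total mass $>j\delta$, the cut-and-paste map is $K^{(\delta)}u=j\delta D_0+\mathbf 1_{r\in[0,R^{(\delta)}_u]}u$, where $R^{(\delta)}_u$ is defined by $\int_{R^{(\delta)}_u}^1u(r)dr=j\delta$. Finally $S^{(\delta,-)}_\delta(u)=K^{(\delta)}(G^{\rm neum}_\delta*u)$. *)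

From Stdlib Require Import Reals.
From Coquelicot Require Import Coquelicot.
Open Scope R_scope.

(* Heat kernel G_t(x) = exp(-x^2/(2t)) / sqrt(2 pi t)  (so G_t(r,r') = heat t (r - r')). *)
Definition heat (t x : R) : R := exp (- (x ^ 2) / (2 * t)) / sqrt (2 * PI * t).

(* Neumann Green function on [0,1]: sum over all images of r' under repeated
   reflections about 0 and 1, i.e. r' + 2k and -r' + 2k, k in Z.
   The Z-sum is written as a nat-series pairing k = n and k = -(n+1). *)
Definition Gneum (t r r' : R) : R :=
  Series (fun n : nat =>
      heat t (r - r' - 2 * INR n) + heat t (r + r' - 2 * INR n)
    + heat t (r - r' + 2 * (INR n + 1)) + heat t (r + r' + 2 * (INR n + 1))).

(* A measure u = c D_0 + rho on [0,1] is represented by the pair (c, rho). *)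
Definition meas : Type := (R * (R -> R))%type.

(* Density of G^neum_t * u (the convolution has no atom). *)
Definition Gneum_conv (t : R) (u : meas) (r : R) : R :=
  fst u * Gneum t r 0 + RInt (fun r' => Gneum t r r' * snd u r') 0 1.

(* Rc is the cut point R^{(delta)}_v of a density v at level m = j delta:
   int_{Rc}^1 v = m (the map is defined only when the total mass exceeds m). *)
Definition is_cut_point (m : R) (v : R -> R) (Rc : R) : Prop :=
  0 <= Rc <= 1 /\ RInt v 0 1 > m /\ RInt v Rc 1 = m.

(* K^{(delta)} v = m D_0 + 1_{[0,Rc]} v, given the cut point Rc of v. *)
Definition cut_paste (m : R) (v : R -> R) (Rc : R) : meas :=
  (m, fun r => if Rle_dec r Rc then v r else 0).

Definition meas_eq (u w : meas) : Prop :=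
  fst u = fst w /\ (forall r, 0 <= r <= 1 -> snd u r = snd w r).

Definition fixed_profile (j delta Rc : R) (rho : R -> R) : Prop :=
  (forall r, 0 <= r <= 1 -> 0 <= rho r) /\
  (forall r, 0 <= r <= Rc ->
     filterlim rho (within (fun y => 0 <= y <= Rc) (locally r)) (locally (rho r))) /\
  (forall r, Rc < r <= 1 -> rho r = 0) /\
  is_cut_point (j * delta) (Gneum_conv delta (j * delta, rho)) Rc /\
  meas_eq (cut_paste (j * delta) (Gneum_conv delta (j * delta, rho)) Rc)
          (j * delta, rho).

From Stdlib Require Import Reals Lra Lia.
From Coquelicot Require Import Coquelicot.
Open Scope R_scope.

(* For [u = j delta D_0 + rho] the equation [S(u) = u] with cut point [Rc] says that on
   [0, Rc] the density [rho] solves the linear equation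
     rho = j delta G(., 0) + int_0^Rc G(., r') rho(r') dr'
   and vanishes beyond [Rc].  On [0,1]^2 the Neumann kernel is at least [c = heat delta 1]
   and integrates to 1 in each variable, so the right-hand side is a contraction of ratio
   [1 - (1 - Rc) c] and has a unique fixed point, which is positive.  Since [G] conserves
   mass, [G * u] then carries beyond [Rc] exactly the mass [j delta] of the atom: the cut
   point condition holds automatically, for every [delta > 0].  Monotonicity in [Rc] is a
   maximum principle for the same equation.  That [G] integrates to 1 comes from the
   Gaussian integral, obtained by differentiating under the integral sign. *)

(* Coquelicot states [RInt] in a normed module; this exposes an equation between
   real integrals as one in [R], so that [ring] and [lra] apply. *)
Ltac R_eq := match goal with |- @eq _ ?a ?b => change (@eq R a b) end.

Lemma ex_RInt_continuousR (f : R -> R) a b :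
  (forall z, Rmin a b <= z <= Rmax a b -> continuous f z) -> ex_RInt f a b.
Proof. apply (ex_RInt_continuous (V := R_CompleteNormedModule)). Qed.

Lemma RInt_correctR (f : R -> R) a b : ex_RInt f a b -> is_RInt f a b (RInt f a b).
Proof. apply (RInt_correct (V := R_CompleteNormedModule)). Qed.

Lemma ex_derive_continuousR (f : R -> R) x : ex_derive f x -> continuous f x.
Proof. apply (ex_derive_continuous (V := R_NormedModule)). Qed.

Lemma RInt_scalR (f : R -> R) a b c :
  ex_RInt f a b -> RInt (fun x => c * f x) a b = c * RInt f a b.
Proof. exact (RInt_scal f a b c). Qed.

Lemma RInt_plusR (f g : R -> R) a b : ex_RInt f a b -> ex_RInt g a b ->
  RInt (fun x => f x + g x) a b = RInt f a b + RInt g a b.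
Proof. exact (RInt_plus f g a b). Qed.

Lemma RInt_minusR (f g : R -> R) a b : ex_RInt f a b -> ex_RInt g a b ->
  RInt (fun x => f x - g x) a b = RInt f a b - RInt g a b.
Proof. exact (RInt_minus f g a b). Qed.

Lemma ex_RInt_scalR (f : R -> R) a b c : ex_RInt f a b -> ex_RInt (fun x => c * f x) a b.
Proof. exact (ex_RInt_scal f a b c). Qed.

Lemma ex_RInt_minusR (f g : R -> R) a b : ex_RInt f a b -> ex_RInt g a b ->
  ex_RInt (fun x => f x - g x) a b.
Proof. exact (ex_RInt_minus f g a b). Qed.

Lemma RInt_ChaslesR (f : R -> R) a b c : ex_RInt f a b -> ex_RInt f b c ->
  RInt f a b + RInt f b c = RInt f a c.
Proof. exact (RInt_Chasles f a b c). Qed.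

Lemma RInt_constR a b c : RInt (fun _ => c) a b = (b - a) * c.
Proof. exact (RInt_const a b c). Qed.

Lemma RInt_swapR (f : R -> R) a b : ex_RInt f a b -> RInt f b a = - RInt f a b.
Proof. intros H. rewrite <- (opp_RInt_swap f a b H). reflexivity. Qed.

Lemma RInt_comp_linR (f : R -> R) u v a b : ex_RInt f (u * a + v) (u * b + v) ->
  RInt (fun y => u * f (u * y + v)) a b = RInt f (u * a + v) (u * b + v).
Proof. exact (RInt_comp_lin f u v a b). Qed.

Lemma RInt_extR (f g : R -> R) a b :
  (forall x, Rmin a b < x < Rmax a b -> f x = g x) -> RInt f a b = RInt g a b.
Proof. exact (RInt_ext f g a b). Qed.

Lemma RInt_translate (f : R -> R) a b c : ex_RInt f (a + c) (b + c) ->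
  RInt (fun x => f (x + c)) a b = RInt f (a + c) (b + c).
Proof.
intros H. replace (a + c) with (1 * a + c) in * by ring. replace (b + c) with (1 * b + c) in * by ring.
rewrite <- RInt_comp_linR by exact H.
apply RInt_extR. intros x _. rewrite Rmult_1_l. f_equal. ring.
Qed.

Lemma RInt_reflect (f : R -> R) a b c : ex_RInt f (c - b) (c - a) ->
  RInt (fun x => f (c - x)) a b = RInt f (c - b) (c - a).
Proof.
intros H.
assert (H' : ex_RInt f (-1 * a + c) (-1 * b + c)).
{ apply ex_RInt_swap. replace (-1 * b + c) with (c - b) by ring.
  replace (-1 * a + c) with (c - a) by ring. exact H. }
rewrite (RInt_extR _ (fun x => -1 * (-1 * f (-1 * x + c)))).
2:{ intros x _. replace (-1 * x + c) with (c - x) by ring. ring. }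
rewrite RInt_scalR.
2:{ apply (ex_RInt_comp_lin f (-1) c a b), H'. }
rewrite RInt_comp_linR by exact H'.
rewrite RInt_swapR by (apply ex_RInt_swap, H').
replace (-1 * b + c) with (c - b) by ring. replace (-1 * a + c) with (c - a) by ring. R_eq; ring.
Qed.
Lemma continuous_eps_delta (f : R -> R) x : continuous f x <->
  forall eps, 0 < eps -> exists d, 0 < d /\ forall y, Rabs (y - x) < d -> Rabs (f y - f x) < eps.
Proof.
split.
- intros H eps He. destruct (proj1 (filterlim_locally f (f x)) H (mkposreal eps He)) as [d Hd].
  exists d. split; [apply cond_pos | intros y Hy; apply (Hd y), Hy].
- intros H. apply filterlim_locally. intros eps.
  destruct (H eps (cond_pos eps)) as [d [Hd Hy]].
  exists (mkposreal d Hd). intros y Hb. apply Hy, Hb.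
Qed.

Lemma Req_forall_eps x y : (forall eps, 0 < eps -> Rabs (x - y) < eps) -> x = y.
Proof.
intros H. destruct (Req_dec x y) as [e|ne]; auto.
assert (Hxy : 0 < Rabs (x - y)) by (apply Rabs_pos_lt; lra).
specialize (H _ Hxy). lra.
Qed.

Lemma continuous_uniform_limit (g : R -> R) (f : nat -> R -> R) (e : nat -> R) x :
  is_lim_seq e 0 -> (forall n y, Rabs (y - x) < 1 -> Rabs (g y - f n y) <= e n) ->
  (forall n, continuous (f n) x) -> continuous g x.
Proof.
intros He Happrox Hf. apply continuous_eps_delta. intros eps Heps.
destruct (proj2 (is_lim_seq_spec e 0) He (mkposreal (eps / 3) ltac:(lra))) as [N HN].
specialize (HN N (le_n N)). simpl in HN. rewrite Rminus_0_r in HN.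
destruct (proj1 (continuous_eps_delta (f N) x) (Hf N) (eps / 3)) as [d [Hd Hfd]]; [lra|].
exists (Rmin 1 d). split; [apply Rmin_pos; lra|]. intros y Hy.
assert (Hy1 : Rabs (y - x) < 1) by (eapply Rlt_le_trans; [exact Hy | apply Rmin_l]).
assert (Hyd : Rabs (y - x) < d) by (eapply Rlt_le_trans; [exact Hy | apply Rmin_r]).
assert (Hx1 : Rabs (x - x) < 1) by (rewrite Rminus_eq_0, Rabs_R0; lra).
specialize (Hfd y Hyd). generalize (Happrox N y Hy1) (Happrox N x Hx1) (Rle_abs (e N)).
intros Ay Ax Ae.
replace (g y - g x) with ((g y - f N y) + (f N y - f N x) - (g x - f N x)) by ring.
eapply Rle_lt_trans; [apply Rabs_triang|]. rewrite Rabs_Ropp.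
eapply Rle_lt_trans; [apply Rplus_le_compat_r, Rabs_triang|]. lra.
Qed.

Lemma Series_tail_geom (a : nat -> R) C q N : 0 <= q < 1 ->
  (forall n, Rabs (a n) <= C * q ^ n) ->
  ex_series a /\ Rabs (Series a - sum_f_R0 a N) <= C * q ^ S N / (1 - q).
Proof.
intros Hq Ha. assert (Hq1 : Rabs q < 1) by (rewrite Rabs_pos_eq; lra).
assert (Egeom : forall c, ex_series (fun n => c * q ^ n)).
{ intros c. apply (ex_series_scal_l c (fun n => q ^ n)). eexists. apply is_series_geom, Hq1. }
assert (Ea : ex_series a) by (apply (ex_series_le a (fun n => C * q ^ n)); [exact Ha | apply Egeom]).
split; [exact Ea|].
rewrite (Series_incr_n a (S N)); [simpl pred | lia | exact Ea].
replace (sum_f_R0 a N + Series (fun k => a (S N + k)%nat) - sum_f_R0 a N)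
  with (Series (fun k => a (S N + k)%nat)) by ring.
assert (Htail : forall k, Rabs (a (S N + k)%nat) <= C * q ^ S N * q ^ k).
{ intros k. rewrite Rmult_assoc, <- pow_add. apply Ha. }
eapply Rle_trans. apply Series_Rabs.
- apply (ex_series_le (fun k => Rabs (a (S N + k)%nat)) (fun k => C * q ^ S N * q ^ k)); [|apply Egeom].
  intros k. change (norm (Rabs (a (S N + k)%nat))) with (Rabs (Rabs (a (S N + k)%nat))).
  rewrite Rabs_Rabsolu. apply Htail.
- eapply Rle_trans. apply Series_le; [|apply Egeom].
  intros k. split; [apply Rabs_pos | apply Htail].
  rewrite Series_scal_l, (is_series_unique (pow q) _ (is_series_geom q Hq1)). right. field. lra.
Qed.

Lemma exp_INR_mult n a : exp (INR n * a) = exp a ^ n.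
Proof.
induction n as [|n IH]; [simpl; rewrite Rmult_0_l; apply exp_0|].
rewrite S_INR, Rmult_plus_distr_r, Rmult_1_l, exp_plus, IH. simpl. ring.
Qed.

Lemma is_lim_seq_geom_tail C q : 0 <= q < 1 -> is_lim_seq (fun n => C * q ^ S n / (1 - q)) 0.
Proof.
intros Hq.
replace (Finite 0) with (Rbar_mult (C * q / (1 - q)) 0) by (simpl; f_equal; ring).
apply (is_lim_seq_ext (fun n => C * q / (1 - q) * q ^ n)).
- intros n. simpl. field. lra.
- apply is_lim_seq_scal_l, is_lim_seq_geom. rewrite Rabs_pos_eq; lra.
Qed.

Lemma Series_nonneg (a : nat -> R) : (forall n, 0 <= a n) -> ex_series a -> 0 <= Series a.
Proof.
intros H E. replace 0 with (Series (fun _ => 0 * 0)).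
- apply Series_le; [|exact E]. intros n. split; [lra | rewrite Rmult_0_l; apply H].
- rewrite Series_scal_l. ring.
Qed.

Lemma continuity_2d_pt_continuous_fst (f : R -> R -> R) x t :
  continuity_2d_pt f x t -> continuous (fun u => f u t) x.
Proof.
intros H. apply continuous_eps_delta. intros eps He. destruct (H (mkposreal eps He)) as [d Hd].
exists d. split; [apply cond_pos|]. intros y Hy. apply Hd; [exact Hy|].
rewrite Rminus_eq_0, Rabs_R0. apply cond_pos.
Qed.

Lemma continuity_2d_pt_continuous_snd (f : R -> R -> R) x t :
  continuity_2d_pt f x t -> continuous (f x) t.
Proof.
intros H. apply continuous_eps_delta. intros eps He. destruct (H (mkposreal eps He)) as [d Hd].
exists d. split; [apply cond_pos|]. intros y Hy. apply Hd; [|exact Hy].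
rewrite Rminus_eq_0, Rabs_R0. apply cond_pos.
Qed.

Lemma continuity_2d_pt_swap (f : R -> R -> R) x t :
  continuity_2d_pt f x t -> continuity_2d_pt (fun u v => f v u) t x.
Proof. intros H eps. destruct (H eps) as [d Hd]. exists d. intros u v Hu Hv. apply Hd; auto. Qed.

Lemma continuous_RInt_param (f : R -> R -> R) a b x0 :
  (forall x t, continuity_2d_pt f x t) -> continuous (fun x => RInt (fun t => f x t) a b) x0.
Proof.
intros Hf. apply continuous_eps_delta. intros eps He.
set (lo := Rmin a b). set (hi := Rmax a b).
assert (Hlh : lo <= hi) by apply Rmin_Rmax.
assert (Hba : Rabs (b - a) = hi - lo).
{ unfold lo, hi. destruct (Rle_dec a b).
  - rewrite Rmin_left, Rmax_right, Rabs_pos_eq; lra.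
  - rewrite Rmin_right, Rmax_left, Rabs_left; lra. }
set (eta := eps / (hi - lo + 1)). assert (Heta : 0 < eta) by (apply Rdiv_lt_0_compat; lra).
destruct (uniform_continuity_2d f (x0 - 1) (x0 + 1) lo hi (fun x y _ _ => Hf x y) (mkposreal eta Heta))
  as [dl Hdl].
exists (Rmin 1 dl). split; [apply Rmin_pos; [lra | apply cond_pos]|]. intros y Hy.
assert (Hy1 : Rabs (y - x0) < 1) by (eapply Rlt_le_trans; [exact Hy | apply Rmin_l]).
assert (Hy2 : Rabs (y - x0) < dl) by (eapply Rlt_le_trans; [exact Hy | apply Rmin_r]).
apply Rabs_def2 in Hy1.
assert (E : forall x, ex_RInt (fun t => f x t) a b).
{ intros x. apply ex_RInt_continuousR. intros t _. apply continuity_2d_pt_continuous_snd, Hf. }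
rewrite <- RInt_minusR by apply E.
apply Rle_lt_trans with (Rabs (b - a) * eta).
- destruct (Rle_dec a b) as [h|h].
  + rewrite (Rabs_pos_eq (b - a)) by lra. apply abs_RInt_le_const; [lra | apply ex_RInt_minusR; apply E|].
    intros t Ht. left. apply (Hdl x0 t y t); unfold lo, hi; try rewrite Rmin_left by lra;
      try rewrite Rmax_right by lra; try lra.
    rewrite Rminus_eq_0, Rabs_R0. apply cond_pos.
  + rewrite RInt_swapR by (apply ex_RInt_swap, ex_RInt_minusR; apply E).
    rewrite Rabs_Ropp, (Rabs_left (b - a)) by lra. replace (- (b - a)) with (a - b) by ring.
    apply abs_RInt_le_const; [lra | apply ex_RInt_swap, ex_RInt_minusR; apply E|].
    intros t Ht. left. apply (Hdl x0 t y t); unfold lo, hi; try rewrite Rmin_right by lra;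
      try rewrite Rmax_left by lra; try lra.
    rewrite Rminus_eq_0, Rabs_R0. apply cond_pos.
- rewrite Hba. unfold eta. apply (Rmult_lt_reg_r (hi - lo + 1)); [lra|].
  replace ((hi - lo) * (eps / (hi - lo + 1)) * (hi - lo + 1)) with ((hi - lo) * eps) by (field; lra). nra.
Qed.

(* Both iterated integrals, as functions of the upper bound [y] of the outer one,
   have derivative [RInt (fun t => f y t) c d] and vanish at [a]. *)
Lemma Fubini_RInt (f : R -> R -> R) a b c d : (forall x t, continuity_2d_pt f x t) ->
  RInt (fun x => RInt (fun t => f x t) c d) a b = RInt (fun t => RInt (fun x => f x t) a b) c d.
Proof.
intros Hf.
pose (phi := (fun y t => RInt (fun x => f x t) a y) : R -> R -> R).
pose (psi := (fun x => RInt (fun t => f x t) c d) : R -> R).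
pose (F := (fun y => RInt (fun t => phi y t) c d) : R -> R).
pose (G := (fun y => RInt psi a y) : R -> R).
assert (Ef : forall t u v, ex_RInt (fun x => f x t) u v).
{ intros. apply ex_RInt_continuousR. intros; apply continuity_2d_pt_continuous_fst, Hf. }
assert (Dphi : forall u t, is_derive (fun z => phi z t) u (f u t)).
{ intros u t. apply (is_derive_RInt (fun x => f x t) (fun z => phi z t) a u).
  - apply filter_forall. intros; apply RInt_correctR, Ef.
  - apply continuity_2d_pt_continuous_fst, Hf. }
assert (Cpsi : forall x, continuous psi x) by (intros; apply continuous_RInt_param, Hf).
assert (Cphi : forall y t, continuous (phi y) t).
{ intros y t. apply (continuous_RInt_param (fun t x => f x t)). intros; apply continuity_2d_pt_swap, Hf. }
assert (DF : forall y, is_derive F y (psi y)).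
{ intros y.
  replace (psi y) with (RInt (fun t => Derive (fun u => phi u t) y) c d).
  - apply (is_derive_RInt_param phi c d y).
    + apply filter_forall. intros x0 t _. eexists. apply Dphi.
    + intros t _. apply (continuity_2d_pt_ext f); [|apply Hf].
      intros; symmetry; apply is_derive_unique, Dphi.
    + apply filter_forall. intros y0. apply ex_RInt_continuousR. intros; apply Cphi.
  - apply RInt_extR. intros; apply is_derive_unique, Dphi. }
assert (DG : forall y, is_derive G y (psi y)).
{ intros y. apply (is_derive_RInt psi G a y); [|apply Cpsi].
  apply filter_forall. intros; apply RInt_correctR, ex_RInt_continuousR; intros; apply Cpsi. }
assert (DFG : forall y, is_derive (fun z => F z - G z) y 0).
{ intros y. replace 0 with (psi y - psi y) by ring. apply (is_derive_minus F G); auto. }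
destruct (MVT_gen (fun z => F z - G z) a b (fun _ => 0)) as [z [_ Hz]].
- intros; apply DFG.
- intros x _. apply continuity_pt_filterlim, (ex_derive_continuousR (fun z => F z - G z)).
  eexists; apply DFG.
- assert (F a = 0).
  { unfold F, phi. rewrite (RInt_extR _ (fun _ => 0)); [rewrite RInt_constR; R_eq; ring|].
    intros; exact (RInt_point a _). }
  assert (G a = 0) by exact (RInt_point a psi).
  change (G b = F b). R_eq. lra.
Qed.

(** * The Gaussian integral *)

Definition gauss (y : R) : R := exp (- y ^ 2).
Definition gauss_int (z : R) : R := RInt gauss 0 z.
Definition gauss_defect_integrand (z s : R) : R := exp (- (z ^ 2 * (1 + s ^ 2))) / (1 + s ^ 2).
Definition gauss_defect (z : R) : R := RInt (gauss_defect_integrand z) 0 1.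

Lemma gauss_continuous x : continuous gauss x.
Proof. apply ex_derive_continuousR. unfold gauss. auto_derive. auto. Qed.

Lemma ex_RInt_gauss a b : ex_RInt gauss a b.
Proof. apply ex_RInt_continuousR. intros; apply gauss_continuous. Qed.

Lemma ex_RInt_gauss_scaled s a b : ex_RInt (fun x => gauss (s * x + 0)) a b.
Proof.
apply ex_RInt_continuousR. intros.
apply (continuous_comp (fun x => s * x + 0) gauss); [|apply gauss_continuous].
apply ex_derive_continuousR. auto_derive. auto.
Qed.

Lemma is_derive_gauss_int z : is_derive gauss_int z (gauss z).
Proof.
apply (is_derive_RInt gauss gauss_int 0 z); [|apply gauss_continuous].
apply filter_forall. intros b. apply RInt_correctR, ex_RInt_gauss.
Qed.

Lemma gauss_int_odd w : gauss_int (- w) = - gauss_int w.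
Proof.
unfold gauss_int. replace (RInt gauss 0 (- w)) with (RInt gauss (-1 * 0 + 0) (-1 * w + 0)) by (f_equal; ring).
rewrite <- (RInt_comp_linR gauss (-1) 0 0 w) by apply ex_RInt_gauss.
rewrite (RInt_extR _ (fun y => -1 * gauss y)).
- rewrite RInt_scalR by apply ex_RInt_gauss. R_eq. ring.
- intros x _. unfold gauss. f_equal. f_equal. f_equal. ring.
Qed.

Lemma one_add_sq_pos s : 0 < 1 + s ^ 2.
Proof. generalize (pow2_ge_0 s). lra. Qed.

Lemma gauss_defect_integrand_continuous z s : continuous (gauss_defect_integrand z) s.
Proof.
apply ex_derive_continuousR. unfold gauss_defect_integrand. auto_derive.
generalize (one_add_sq_pos s). lra.
Qed.

Lemma ex_RInt_gauss_defect_integrand z a b : ex_RInt (gauss_defect_integrand z) a b.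
Proof. apply ex_RInt_continuousR. intros; apply gauss_defect_integrand_continuous. Qed.

Lemma is_derive_gauss_defect_integrand u v :
  is_derive (fun z => gauss_defect_integrand z v) u (-2 * u * exp (- (u ^ 2 * (1 + v ^ 2)))).
Proof.
unfold gauss_defect_integrand. auto_derive; auto.
replace (- (u * (u * 1) * (1 + v * (v * 1)))) with (- (u ^ 2 * (1 + v ^ 2))) by ring.
field. generalize (one_add_sq_pos v); simpl; lra.
Qed.

Lemma is_derive_gauss_defect z : is_derive gauss_defect z (-2 * gauss z * gauss_int z).
Proof.
assert (HD : forall u v, Derive (fun z => gauss_defect_integrand z v) u
                         = -2 * u * exp (- (u ^ 2 * (1 + v ^ 2)))).
{ intros. apply is_derive_unique, is_derive_gauss_defect_integrand. }
replace (-2 * gauss z * gauss_int z)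
  with (RInt (fun t => Derive (fun u => gauss_defect_integrand u t) z) 0 1).
- apply is_derive_RInt_param.
  + apply filter_forall. intros x t _. eexists. apply is_derive_gauss_defect_integrand.
  + intros t _.
    apply (continuity_2d_pt_ext (fun u v => -2 * u * exp (- (u * u + u * u * (v * v))))).
    { intros; rewrite HD. f_equal. f_equal. f_equal. ring. }
    repeat first [ apply continuity_2d_pt_mult | apply continuity_2d_pt_plus
                 | apply continuity_2d_pt_opp | apply continuity_2d_pt_const
                 | apply continuity_2d_pt_id1 | apply continuity_2d_pt_id2
                 | apply continuity_1d_2d_pt_comp;
                   [apply derivable_continuous_pt, derivable_pt_exp|] ].
  + apply filter_forall. intros y. apply ex_RInt_gauss_defect_integrand.
- rewrite (RInt_extR _ (fun t => (-2 * gauss z) * (z * gauss (z * t + 0)))).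
  2:{ intros x _. rewrite HD. unfold gauss.
      replace (-2 * exp (- z ^ 2) * (z * exp (- (z * x + 0) ^ 2)))
        with (-2 * z * (exp (- z ^ 2) * exp (- (z * x + 0) ^ 2))) by ring.
      rewrite <- exp_plus. f_equal. f_equal. ring. }
  rewrite RInt_scalR by (apply ex_RInt_scalR, ex_RInt_gauss_scaled).
  rewrite RInt_comp_linR by apply ex_RInt_gauss.
  unfold gauss_int. f_equal. f_equal; ring.
Qed.

Lemma gauss_defect_0 : gauss_defect 0 = PI / 4.
Proof.
unfold gauss_defect. replace (PI / 4) with (atan 1 - atan 0) by (rewrite atan_1, atan_0; ring).
rewrite (RInt_extR _ (fun s => / (1 + s ^ 2))).
2:{ intros x _. unfold gauss_defect_integrand.
    replace (- (0 ^ 2 * (1 + x ^ 2))) with 0 by ring. rewrite exp_0. unfold Rdiv. apply Rmult_1_l. }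
apply is_RInt_unique, (is_RInt_derive atan (fun s => / (1 + s ^ 2))).
- intros x _. apply is_derive_Reals, derivable_pt_lim_atan.
- intros x _. apply ex_derive_continuousR. auto_derive. generalize (one_add_sq_pos x); lra.
Qed.

(* The left-hand side has derivative zero and equals [atan 1] at [z = 0]. *)
Lemma gauss_int_sq_add_defect z : gauss_int z ^ 2 + gauss_defect z = PI / 4.
Proof.
set (F := fun z => gauss_int z ^ 2 + gauss_defect z).
assert (DF : forall x, is_derive F x 0).
{ intros x. unfold F.
  replace 0 with (INR 2 * gauss x * gauss_int x ^ pred 2 + (-2 * gauss x * gauss_int x))
    by (simpl; ring).
  apply (is_derive_plus (fun z => gauss_int z ^ 2) gauss_defect).
  - apply is_derive_pow, is_derive_gauss_int.
  - apply is_derive_gauss_defect. }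
destruct (MVT_gen F 0 z (fun _ => 0)) as [c [_ Hc]].
- intros; apply DF.
- intros x _. apply continuity_pt_filterlim, ex_derive_continuousR. eexists; apply DF.
- assert (F 0 = PI / 4).
  { unfold F, gauss_int. rewrite RInt_point, gauss_defect_0. simpl. change zero with 0. ring. }
  change (F z = PI / 4). lra.
Qed.

Lemma gauss_defect_bounds z : 0 <= gauss_defect z <= exp (- z ^ 2) * (PI / 4).
Proof.
split.
- apply RInt_ge_0; [lra | apply ex_RInt_gauss_defect_integrand|].
  intros x _. left. apply Rdiv_lt_0_compat; [apply exp_pos | apply one_add_sq_pos].
- rewrite <- gauss_defect_0. unfold gauss_defect.
  rewrite <- RInt_scalR by apply ex_RInt_gauss_defect_integrand.
  apply RInt_le; [lra | apply ex_RInt_gauss_defect_integrand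
                 | apply ex_RInt_scalR, ex_RInt_gauss_defect_integrand|].
  intros x _. unfold gauss_defect_integrand, Rdiv.
  replace (- (0 ^ 2 * (1 + x ^ 2))) with 0 by ring. rewrite exp_0, Rmult_1_l.
  apply Rmult_le_compat_r; [left; apply Rinv_0_lt_compat, one_add_sq_pos|].
  assert (0 <= z ^ 2 * x ^ 2) by (apply Rmult_le_pos; apply pow2_ge_0).
  destruct (Rle_lt_or_eq_dec (- (z ^ 2 * (1 + x ^ 2))) (- z ^ 2)) as [h|h]; [nra| |].
  + left. apply exp_increasing, h.
  + right. rewrite h. reflexivity.
Qed.

Lemma gauss_int_bounds w : 0 <= w ->
  0 <= gauss_int w <= sqrt PI / 2 /\ 1 - exp (- w ^ 2) <= 2 * gauss_int w / sqrt PI.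
Proof.
intros Hw.
assert (HP : 0 < sqrt PI) by (apply sqrt_lt_R0, PI_RGT_0).
assert (HP2 : sqrt PI * sqrt PI = PI) by (apply sqrt_sqrt; generalize PI_RGT_0; lra).
assert (J0 : 0 <= gauss_int w).
{ apply RInt_ge_0; [exact Hw | apply ex_RInt_gauss|]. intros; left; apply exp_pos. }
generalize (gauss_int_sq_add_defect w) (gauss_defect_bounds w). intros Gi [Hb1 Hb2].
assert (Ee : 0 < exp (- w ^ 2)) by apply exp_pos.
assert (JU : gauss_int w <= sqrt PI / 2) by nra.
split; [lra|].
apply (Rmult_le_reg_r (sqrt PI)); [exact HP|].
unfold Rdiv. rewrite Rmult_assoc, Rinv_l, Rmult_1_r by lra. nra.
Qed.

Lemma sqrt_2PI_pos d : 0 < d -> 0 < sqrt (2 * PI * d).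
Proof. intros Hd. apply sqrt_lt_R0. generalize PI_RGT_0. nra. Qed.

Lemma heat_pos d x : 0 < d -> 0 < heat d x.
Proof. intros Hd. apply Rdiv_lt_0_compat; [apply exp_pos | apply sqrt_2PI_pos, Hd]. Qed.

Lemma heat_even d x : heat d (- x) = heat d x.
Proof. unfold heat. replace ((- x) ^ 2) with (x ^ 2) by ring. reflexivity. Qed.

Lemma heat_continuous d x : 0 < d -> continuous (heat d) x.
Proof. intros Hd. apply ex_derive_continuousR. unfold heat. auto_derive. lra. Qed.

Lemma ex_RInt_heat d a b : 0 < d -> ex_RInt (heat d) a b.
Proof. intros Hd. apply ex_RInt_continuousR. intros; apply heat_continuous, Hd. Qed.

Lemma ex_RInt_heat_shift d c a b : 0 < d -> ex_RInt (fun x => heat d (x + c)) a b.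
Proof.
intros Hd. apply ex_RInt_continuousR. intros.
apply (continuous_comp (fun x => x + c) (heat d)); [|apply heat_continuous, Hd].
apply ex_derive_continuousR. auto_derive. auto.
Qed.

Lemma heat_le_abs d x y : 0 < d -> Rabs x <= Rabs y -> heat d y <= heat d x.
Proof.
intros Hd Hxy. unfold heat, Rdiv.
apply Rmult_le_compat_r; [left; apply Rinv_0_lt_compat, sqrt_2PI_pos, Hd|].
rewrite <- (pow2_abs x), <- (pow2_abs y).
assert (Hsq : Rabs x ^ 2 <= Rabs y ^ 2) by (generalize (Rabs_pos x); nra).
assert (Hi : 0 < / (2 * d)) by (apply Rinv_0_lt_compat; lra).
destruct (Rle_lt_or_eq_dec _ _ Hsq) as [h|h].
- left. apply exp_increasing. nra.
- right. rewrite h. reflexivity.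
Qed.

Lemma heat_le_exp_abs d x : 0 < d ->
  heat d x <= exp (/ (2 * d)) / sqrt (2 * PI * d) * exp (- Rabs x / d).
Proof.
intros Hd. unfold heat, Rdiv.
replace (exp (/ (2 * d)) * / sqrt (2 * PI * d) * exp (- Rabs x * / d))
  with (exp (/ (2 * d) + - Rabs x * / d) * / sqrt (2 * PI * d)) by (rewrite exp_plus; ring).
apply Rmult_le_compat_r; [left; apply Rinv_0_lt_compat, sqrt_2PI_pos, Hd|].
rewrite <- (pow2_abs x).
assert (Hi : 0 < / d) by (apply Rinv_0_lt_compat; lra).
assert (Hexp : - Rabs x ^ 2 * / (2 * d) <= / (2 * d) + - Rabs x * / d).
{ replace (/ (2 * d)) with (/ 2 * / d) by (field; lra).
  generalize (pow2_ge_0 (Rabs x - 1)). nra. }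
destruct (Rle_lt_or_eq_dec _ _ Hexp) as [h|h].
- left. apply exp_increasing, h.
- right. rewrite h. reflexivity.
Qed.

Lemma RInt_heat d l u : 0 < d ->
  RInt (heat d) l u = (gauss_int (u / sqrt (2 * d)) - gauss_int (l / sqrt (2 * d))) / sqrt PI.
Proof.
intros Hd. set (s := sqrt (2 * d)).
assert (Hs : 0 < s) by (apply sqrt_lt_R0; lra).
assert (Hs2 : s * s = 2 * d) by (apply sqrt_sqrt; lra).
assert (HP : 0 < sqrt PI) by (apply sqrt_lt_R0, PI_RGT_0).
assert (Hss : sqrt (2 * PI * d) = s * sqrt PI).
{ unfold s. rewrite <- sqrt_mult by (generalize PI_RGT_0; lra). f_equal; ring. }
rewrite (RInt_extR _ (fun x => / (s * sqrt PI) * (s * (/ s * gauss (/ s * x + 0))))).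
2:{ intros x _. unfold heat, gauss. rewrite Hss. field_simplify_eq; [|split; lra].
    f_equal. rewrite <- Hs2. field. lra. }
rewrite RInt_scalR by (apply ex_RInt_scalR, ex_RInt_scalR, ex_RInt_gauss_scaled).
rewrite RInt_scalR by (apply ex_RInt_scalR, ex_RInt_gauss_scaled).
rewrite RInt_comp_linR by apply ex_RInt_gauss.
assert (Hdiff : RInt gauss (l / s) (u / s) = gauss_int (u / s) - gauss_int (l / s)).
{ unfold gauss_int. rewrite <- (RInt_ChaslesR gauss 0 (l / s) (u / s)) by apply ex_RInt_gauss.
  lra. }
replace (/ s * l + 0) with (l / s) by (unfold Rdiv; ring).
replace (/ s * u + 0) with (u / s) by (unfold Rdiv; ring).
rewrite Hdiff. R_eq. field. lra.
Qed.

Lemma RInt_heat_centered d l u : 0 < d -> l <= 0 -> 0 <= u ->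
  RInt (heat d) l u = (gauss_int (u / sqrt (2 * d)) + gauss_int (- l / sqrt (2 * d))) / sqrt PI.
Proof.
intros Hd Hl Hu. rewrite RInt_heat by exact Hd.
replace (- l / sqrt (2 * d)) with (- (l / sqrt (2 * d))) by (unfold Rdiv; ring).
rewrite gauss_int_odd. R_eq. unfold Rdiv. ring.
Qed.

Lemma RInt_heat_le_1 d l u : 0 < d -> l <= 0 -> 0 <= u -> RInt (heat d) l u <= 1.
Proof.
intros Hd Hl Hu. rewrite RInt_heat_centered by assumption.
assert (Hs : 0 < sqrt (2 * d)) by (apply sqrt_lt_R0; lra).
assert (HP : 0 < sqrt PI) by (apply sqrt_lt_R0, PI_RGT_0).
destruct (gauss_int_bounds (u / sqrt (2 * d))) as [[a1 a2] _]; [apply Rdiv_le_0_compat; lra|].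
destruct (gauss_int_bounds (- l / sqrt (2 * d))) as [[b1 b2] _]; [apply Rdiv_le_0_compat; lra|].
apply (Rmult_le_reg_r (sqrt PI)); [exact HP|].
unfold Rdiv. rewrite Rmult_assoc, Rinv_l by lra. lra.
Qed.

Lemma exp_neg_sq_lt_inv t : 1 <= t -> exp (- t ^ 2) < / t.
Proof.
intros Ht. apply (Rmult_lt_reg_r (exp (t ^ 2))); [apply exp_pos|].
rewrite <- exp_plus. replace (- t ^ 2 + t ^ 2) with 0 by ring. rewrite exp_0.
assert (1 + t ^ 2 < exp (t ^ 2)) by (apply exp_ineq1; nra).
apply (Rmult_lt_reg_l t); [lra|]. rewrite <- Rmult_assoc, Rinv_r by lra. nra.
Qed.

Lemma RInt_heat_tails d eps : 0 < d -> 0 < eps -> exists A, 0 < A /\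
  forall l u, l <= - A -> A <= u -> 1 - eps < RInt (heat d) l u.
Proof.
intros Hd He.
set (s := sqrt (2 * d)). assert (Hs : 0 < s) by (apply sqrt_lt_R0; lra).
assert (HP : 0 < sqrt PI) by (apply sqrt_lt_R0, PI_RGT_0).
set (t := 1 + / eps). assert (Ht : 1 < t) by (unfold t; generalize (Rinv_0_lt_compat eps He); lra).
assert (Hsmall : forall w, t <= w -> exp (- w ^ 2) < eps).
{ intros w Hw. apply Rle_lt_trans with (exp (- t ^ 2)).
  - destruct (Req_dec w t) as [->|Hne]; [lra|]. left. apply exp_increasing. nra.
  - apply Rlt_le_trans with (/ t); [apply exp_neg_sq_lt_inv; lra|].
    rewrite <- (Rinv_inv eps).
    apply Rinv_le_contravar; [apply Rinv_0_lt_compat; lra | unfold t; lra]. }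
exists (s * t). split; [nra|]. intros l u Hl Hu.
rewrite RInt_heat_centered by (auto; nra).
assert (Hu' : t <= u / s).
{ apply (Rmult_le_reg_r s); [exact Hs|]. unfold Rdiv. rewrite Rmult_assoc, Rinv_l by lra. lra. }
assert (Hl' : t <= - l / s).
{ apply (Rmult_le_reg_r s); [exact Hs|]. unfold Rdiv. rewrite Rmult_assoc, Rinv_l by lra. lra. }
destruct (gauss_int_bounds (u / s)) as [_ a3]; [lra|].
destruct (gauss_int_bounds (- l / s)) as [_ b3]; [lra|].
generalize (Hsmall _ Hu') (Hsmall _ Hl'). intros e1 e2. fold s.
replace ((gauss_int (u / s) + gauss_int (- l / s)) / sqrt PI)
  with ((2 * gauss_int (u / s) / sqrt PI + 2 * gauss_int (- l / s) / sqrt PI) / 2) by (field; lra).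
lra.
Qed.

(** * The heat kernel periodized over [2 Z] *)

Definition heat_images (d x : R) (n : nat) : R :=
  heat d (x - 2 * INR n) + heat d (x + 2 * (INR n + 1)).

(* The sum over [k] in [Z] of [heat d (x - 2 k)], the images [k = n] and [k = -(n+1)] paired. *)
Definition heat_per (d x : R) : R := Series (heat_images d x).

Lemma heat_images_geom_bound d B : 0 < d -> exists C, 0 <= C /\
  forall x n, Rabs x <= B -> 0 <= heat_images d x n <= C * exp (- 2 / d) ^ n.
Proof.
intros Hd. set (K := exp (/ (2 * d)) / sqrt (2 * PI * d)).
assert (HK : 0 < K) by (apply Rdiv_lt_0_compat; [apply exp_pos | apply sqrt_2PI_pos, Hd]).
assert (Hterm : forall y n, 2 * INR n - B <= Rabs y ->
          heat d y <= K * exp (B / d) * exp (- 2 / d) ^ n).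
{ intros y n Hy. eapply Rle_trans; [apply heat_le_exp_abs, Hd|].
  rewrite (Rmult_assoc K). apply Rmult_le_compat_l; [lra|].
  rewrite <- exp_INR_mult, <- exp_plus.
  assert (Hi : 0 < / d) by (apply Rinv_0_lt_compat; lra).
  destruct (Rle_lt_or_eq_dec (- Rabs y / d) (B / d + INR n * (- 2 / d))) as [h|h].
  - unfold Rdiv. nra.
  - left. apply exp_increasing, h.
  - right. rewrite h. reflexivity. }
exists (2 * (K * exp (B / d))). split; [generalize (exp_pos (B / d)); nra|].
intros x n Hx. apply Rabs_le_between in Hx. assert (Hn := pos_INR n).
assert (H1 := Hterm (x - 2 * INR n) n). assert (H2 := Hterm (x + 2 * (INR n + 1)) n).
assert (P1 := heat_pos d (x - 2 * INR n) Hd). assert (P2 := heat_pos d (x + 2 * (INR n + 1)) Hd).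
assert (A1 : 2 * INR n - B <= Rabs (x - 2 * INR n))
  by (generalize (Rabs_maj2 (x - 2 * INR n)); lra).
assert (A2 : 2 * INR n - B <= Rabs (x + 2 * (INR n + 1)))
  by (generalize (Rle_abs (x + 2 * (INR n + 1))); lra).
unfold heat_images. split; lra.
Qed.

Lemma heat_per_partial_sum d B : 0 < d -> exists e, is_lim_seq e 0 /\
  forall x N, Rabs x <= B -> ex_series (heat_images d x) /\
    Rabs (heat_per d x - sum_f_R0 (heat_images d x) N) <= e N.
Proof.
intros Hd. destruct (heat_images_geom_bound d B Hd) as [C [HC Hb]].
set (q := exp (- 2 / d)) in *.
assert (Hq : 0 <= q < 1).
{ split; [left; apply exp_pos|]. rewrite <- exp_0. apply exp_increasing.
  unfold Rdiv. assert (0 < / d) by (apply Rinv_0_lt_compat, Hd). nra. }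
exists (fun N => C * q ^ S N / (1 - q)). split; [apply is_lim_seq_geom_tail, Hq|].
intros x N Hx. apply Series_tail_geom; [exact Hq|].
intros n. destruct (Hb x n Hx). rewrite Rabs_pos_eq; lra.
Qed.

Lemma heat_images_continuous d n x : 0 < d -> continuous (fun y => heat_images d y n) x.
Proof.
intros Hd. unfold heat_images.
apply (continuous_plus (fun y => heat d (y - 2 * INR n)) (fun y => heat d (y + 2 * (INR n + 1)))).
- apply (continuous_comp (fun y => y - 2 * INR n) (heat d)); [|apply heat_continuous, Hd].
  apply ex_derive_continuousR. auto_derive. auto.
- apply (continuous_comp (fun y => y + 2 * (INR n + 1)) (heat d)); [|apply heat_continuous, Hd].
  apply ex_derive_continuousR. auto_derive. auto.
Qed.

Lemma sum_heat_images_continuous d N x : 0 < d ->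
  continuous (fun y => sum_f_R0 (heat_images d y) N) x.
Proof.
intros Hd. induction N as [|N IH]; simpl; [apply heat_images_continuous, Hd|].
apply (continuous_plus (fun y => sum_f_R0 (heat_images d y) N) (fun y => heat_images d y (S N))).
- exact IH.
- apply heat_images_continuous, Hd.
Qed.

Lemma heat_per_continuous d x : 0 < d -> continuous (heat_per d) x.
Proof.
intros Hd. destruct (heat_per_partial_sum d (Rabs x + 1) Hd) as [e [He Hb]].
apply (continuous_uniform_limit _ (fun N y => sum_f_R0 (heat_images d y) N) e x He).
- intros N y Hy. apply Hb.
  replace y with ((y - x) + x) by ring. eapply Rle_trans; [apply Rabs_triang | lra].
- intros N. apply sum_heat_images_continuous, Hd.
Qed.

Lemma ex_RInt_heat_per d a b : 0 < d -> ex_RInt (heat_per d) a b.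
Proof. intros Hd. apply ex_RInt_continuousR. intros; apply heat_per_continuous, Hd. Qed.

Lemma heat_le_heat_per d x : 0 < d -> heat d x <= heat_per d x.
Proof.
intros Hd. destruct (heat_per_partial_sum d (Rabs x) Hd) as [e [_ Hb]].
destruct (Hb x 0%nat (Rle_refl _)) as [Ex _].
unfold heat_per. rewrite Series_incr_1 by exact Ex.
assert (0 <= Series (fun k => heat_images d x (S k))).
{ apply Series_nonneg; [|apply (ex_series_incr_1 (heat_images d x)), Ex].
  intros n. unfold heat_images.
  generalize (heat_pos d (x - 2 * INR (S n)) Hd) (heat_pos d (x + 2 * (INR (S n) + 1)) Hd). lra. }
change (heat_images d x 0) with (heat d (x - 2 * INR 0) + heat d (x + 2 * (INR 0 + 1))).
simpl INR. replace (x - 2 * 0) with x by ring. generalize (heat_pos d (x + 2 * (0 + 1)) Hd). lra.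
Qed.

Lemma heat_per_pos d x : 0 < d -> 0 < heat_per d x.
Proof. intros Hd. eapply Rlt_le_trans; [apply heat_pos, Hd | apply heat_le_heat_per, Hd]. Qed.

Lemma heat_per_even d x : 0 < d -> heat_per d (- x) = heat_per d x.
Proof.
intros Hd. destruct (heat_per_partial_sum d (Rabs x) Hd) as [e [_ Hb]].
destruct (Hb x 0%nat (Rle_refl _)) as [Ex _].
set (a := fun n => heat d (x - 2 * INR n)).
set (b := fun n => heat d (x + 2 * (INR n + 1))).
set (b' := fun n => heat d (x + 2 * INR n)).
assert (Hab : forall n, 0 <= a n <= heat_images d x n /\ 0 <= b n <= heat_images d x n).
{ intros n. unfold a, b, heat_images.
  generalize (heat_pos d (x - 2 * INR n) Hd) (heat_pos d (x + 2 * (INR n + 1)) Hd). lra. }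
assert (Ea : ex_series a) by (apply (ex_series_le a (heat_images d x)); [|exact Ex];
  intros n; destruct (Hab n) as [[] _]; change (norm (a n)) with (Rabs (a n)); rewrite Rabs_pos_eq; lra).
assert (Eb : ex_series b) by (apply (ex_series_le b (heat_images d x)); [|exact Ex];
  intros n; destruct (Hab n) as [_ []]; change (norm (b n)) with (Rabs (b n)); rewrite Rabs_pos_eq; lra).
assert (Hb' : forall k, b' (S k) = b k) by (intros k; unfold b', b; rewrite S_INR; reflexivity).
assert (Eb' : ex_series b') by (apply ex_series_incr_1, (ex_series_ext b); auto).
assert (EaS : ex_series (fun k => a (S k))) by (apply (ex_series_incr_1 a), Ea).
unfold heat_per.
rewrite (Series_ext (heat_images d (- x)) (fun n => b' n + a (S n))).
2:{ intros n. unfold heat_images, a, b'.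
    rewrite <- (heat_even d (- x - 2 * INR n)), <- (heat_even d (- x + 2 * (INR n + 1))), S_INR.
    f_equal; f_equal; ring. }
rewrite (Series_ext (heat_images d x) (fun n => a n + b n)) by reflexivity.
rewrite !Series_plus by assumption.
rewrite (Series_incr_1 b'), (Series_incr_1 a) by assumption.
rewrite (Series_ext (fun k => b' (S k)) b) by exact Hb'.
replace (b' 0%nat) with (a 0%nat) by (unfold a, b'; simpl; f_equal; ring).
ring.
Qed.

Lemma RInt_sum_heat_images d N a : 0 < d ->
  RInt (fun x => sum_f_R0 (heat_images d x) N) a (a + 2)
  = RInt (heat d) (a - 2 * INR N) (a + 2 * INR N + 4).
Proof.
intros Hd. assert (E := ex_RInt_heat d).
assert (Hterm : forall n, RInt (fun x => heat_images d x n) a (a + 2) =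
   RInt (heat d) (a - 2 * INR n) (a - 2 * INR n + 2)
   + RInt (heat d) (a + 2 * INR n + 2) (a + 2 * INR n + 4)).
{ intros n. unfold heat_images.
  rewrite (RInt_extR _ (fun x => heat d (x + - (2 * INR n)) + heat d (x + 2 * (INR n + 1))))
    by (intros; reflexivity).
  rewrite RInt_plusR by (apply ex_RInt_heat_shift, Hd).
  rewrite !RInt_translate by auto.
  R_eq. f_equal; f_equal; ring. }
induction N as [|N IH].
- simpl sum_f_R0. rewrite Hterm. simpl INR.
  replace (a - 2 * 0 + 2) with (a + 2 * 0 + 2) by ring.
  rewrite (RInt_ChaslesR (heat d)) by auto. R_eq. f_equal; ring.
- simpl sum_f_R0.
  rewrite RInt_plusR.
  2:{ apply ex_RInt_continuousR. intros; apply sum_heat_images_continuous, Hd. }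
  2:{ apply ex_RInt_continuousR. intros; apply heat_images_continuous, Hd. }
  rewrite IH, Hterm, S_INR.
  replace (a - 2 * (INR N + 1) + 2) with (a - 2 * INR N) by ring.
  replace (a + 2 * (INR N + 1) + 2) with (a + 2 * INR N + 4) by ring.
  replace (a + 2 * (INR N + 1) + 4) with (a + 2 * INR N + 4 + 2) by ring.
  rewrite <- (RInt_ChaslesR (heat d) (a - 2 * (INR N + 1)) (a - 2 * INR N) (a + 2 * INR N + 4 + 2)) by auto.
  rewrite <- (RInt_ChaslesR (heat d) (a - 2 * INR N) (a + 2 * INR N + 4) (a + 2 * INR N + 4 + 2)) by auto.
  R_eq. ring.
Qed.

(* The windows [a - 2N, a + 2N + 4] exhaust the line, on which [heat d] has mass 1. *)
Lemma RInt_heat_per_period d a : 0 < d -> RInt (heat_per d) a (a + 2) = 1.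
Proof.
intros Hd. apply Req_forall_eps. intros eps He.
destruct (heat_per_partial_sum d (Rabs a + 2) Hd) as [e [Hlim Hb]].
destruct (RInt_heat_tails d (eps / 2) Hd) as [A [HA0 HA]]; [lra|].
destruct (proj2 (is_lim_seq_spec e 0) Hlim (mkposreal (eps / 4) ltac:(lra))) as [N0 HN0].
destruct (INR_unbounded (A + Rabs a)) as [N1 HN1].
set (N := Nat.max N0 N1).
assert (HeN : e N < eps / 4).
{ specialize (HN0 N ltac:(unfold N; lia)). simpl in HN0. apply Rabs_def2 in HN0. lra. }
assert (HNN1 : INR N1 <= INR N) by (apply le_INR; unfold N; lia).
assert (Habs : forall x, a <= x <= a + 2 -> Rabs x <= Rabs a + 2).
{ intros x Hx. apply Rabs_le. generalize (Rle_abs a) (Rle_abs (- a)). rewrite Rabs_Ropp. lra. }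
assert (Happrox : Rabs (RInt (heat_per d) a (a + 2)
                        - RInt (fun x => sum_f_R0 (heat_images d x) N) a (a + 2)) <= 2 * e N).
{ rewrite <- RInt_minusR.
  - replace (2 * e N) with ((a + 2 - a) * e N) by ring.
    apply abs_RInt_le_const; [lra| |].
    + apply ex_RInt_minusR; [apply ex_RInt_heat_per, Hd|].
      apply ex_RInt_continuousR. intros; apply sum_heat_images_continuous, Hd.
    + intros t Ht. apply Hb, Habs, Ht.
  - apply ex_RInt_heat_per, Hd.
  - apply ex_RInt_continuousR. intros; apply sum_heat_images_continuous, Hd. }
rewrite RInt_sum_heat_images in Happrox by exact Hd.
assert (HN := pos_INR N). generalize (Rle_abs a) (Rle_abs (- a)). rewrite Rabs_Ropp. intros.
assert (L1 : RInt (heat d) (a - 2 * INR N) (a + 2 * INR N + 4) <= 1)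
  by (apply RInt_heat_le_1; [exact Hd | lra | lra]).
assert (L2 : 1 - eps / 2 < RInt (heat d) (a - 2 * INR N) (a + 2 * INR N + 4))
  by (apply HA; lra).
apply Rabs_le_between in Happrox.
apply Rabs_def1; lra.
Qed.

(** * The Neumann kernel *)

Lemma Gneum_heat_per d r r' : 0 < d -> Gneum d r r' = heat_per d (r - r') + heat_per d (r + r').
Proof.
intros Hd. destruct (heat_per_partial_sum d (Rabs (r - r') + Rabs (r + r')) Hd) as [e [_ Hb]].
assert (B1 : Rabs (r - r') <= Rabs (r - r') + Rabs (r + r')) by (generalize (Rabs_pos (r + r')); lra).
assert (B2 : Rabs (r + r') <= Rabs (r - r') + Rabs (r + r')) by (generalize (Rabs_pos (r - r')); lra).
unfold Gneum, heat_per.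
rewrite <- Series_plus by (apply (Hb _ 0%nat); assumption).
apply Series_ext. intros n. unfold heat_images. ring.
Qed.

Lemma Gneum_continuity_2d d x t : 0 < d -> continuity_2d_pt (Gneum d) x t.
Proof.
intros Hd. apply (continuity_2d_pt_ext (fun u v => heat_per d (u - v) + heat_per d (u + v))).
{ intros; symmetry; apply Gneum_heat_per, Hd. }
apply continuity_2d_pt_plus; apply continuity_1d_2d_pt_comp;
  try (apply continuity_pt_filterlim, heat_per_continuous, Hd).
- apply continuity_2d_pt_minus; [apply continuity_2d_pt_id1 | apply continuity_2d_pt_id2].
- apply continuity_2d_pt_plus; [apply continuity_2d_pt_id1 | apply continuity_2d_pt_id2].
Qed.

Lemma Gneum_ge_heat_1 d r r' : 0 < d -> Rabs (r - r') <= 1 -> heat d 1 <= Gneum d r r'.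
Proof.
intros Hd H. rewrite Gneum_heat_per by exact Hd.
assert (heat d 1 <= heat d (r - r')) by (apply heat_le_abs; [exact Hd | rewrite Rabs_R1; exact H]).
generalize (heat_le_heat_per d (r - r') Hd) (heat_per_pos d (r + r') Hd). lra.
Qed.

Lemma ex_RInt_heat_per_affine d s c a b : 0 < d -> ex_RInt (fun x => heat_per d (s * x + c)) a b.
Proof.
intros Hd. apply ex_RInt_continuousR. intros.
apply (continuous_comp (fun x => s * x + c) (heat_per d)); [|apply heat_per_continuous, Hd].
apply ex_derive_continuousR. auto_derive. auto.
Qed.

(* Unfolding the reflections: both halves of [Gneum] together sweep one period of [heat_per]. *)
Lemma RInt_Gneum_fst d r' : 0 < d -> RInt (fun r => Gneum d r r') 0 1 = 1.
Proof.
intros Hd. assert (E := ex_RInt_heat_per d).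
rewrite (RInt_extR _ (fun r => heat_per d (1 * r + - r') + heat_per d (1 * r + r'))).
2:{ intros. rewrite Gneum_heat_per by exact Hd. f_equal; f_equal; ring. }
rewrite RInt_plusR by (apply ex_RInt_heat_per_affine, Hd).
rewrite !(RInt_extR (fun r => heat_per d (1 * r + _)) (fun r => heat_per d (r + _)))
  by (intros; rewrite Rmult_1_l; reflexivity).
rewrite !RInt_translate by auto.
rewrite (RInt_extR (heat_per d) (fun x => heat_per d (0 - x))).
2:{ intros. replace (0 - x) with (- x) by ring. rewrite heat_per_even; auto. }
rewrite RInt_reflect by auto.
replace (0 - (1 + - r')) with (r' - 1) by ring. replace (0 - (0 + - r')) with r' by ring.
replace (0 + r') with r' by ring. replace (1 + r') with ((r' - 1) + 2) by ring.
rewrite RInt_ChaslesR by auto. apply RInt_heat_per_period, Hd.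
Qed.

Lemma RInt_Gneum_snd d r : 0 < d -> RInt (fun r' => Gneum d r r') 0 1 = 1.
Proof.
intros Hd. assert (E := ex_RInt_heat_per d).
rewrite (RInt_extR _ (fun r' => heat_per d (r - r') + heat_per d (1 * r' + r))).
2:{ intros. rewrite Gneum_heat_per by exact Hd. f_equal; f_equal; ring. }
rewrite RInt_plusR.
2:{ apply (ex_RInt_ext (fun x => heat_per d (-1 * x + r))); [|apply ex_RInt_heat_per_affine, Hd].
    intros; f_equal; ring. }
2:{ apply ex_RInt_heat_per_affine, Hd. }
rewrite (RInt_extR (fun r' => heat_per d (1 * r' + r)) (fun r' => heat_per d (r' + r)))
  by (intros; rewrite Rmult_1_l; reflexivity).
rewrite RInt_translate, RInt_reflect by auto.
replace (r - 0) with r by ring. replace (0 + r) with r by ring. replace (1 + r) with ((r - 1) + 2) by ring.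
rewrite RInt_ChaslesR by auto. apply RInt_heat_per_period, Hd.
Qed.

(** * Fixed profiles of a doubly stochastic kernel on [0,1] *)

Definition clamp (Rc x : R) : R := Rmax 0 (Rmin x Rc).

Lemma clamp_range Rc x : 0 <= Rc -> 0 <= clamp Rc x <= Rc.
Proof. intros H. unfold clamp, Rmax, Rmin. repeat destruct Rle_dec; lra. Qed.

Lemma clamp_id Rc x : 0 <= x <= Rc -> clamp Rc x = x.
Proof. intros H. unfold clamp, Rmax, Rmin. repeat destruct Rle_dec; lra. Qed.

Lemma clamp_continuous Rc x : 0 <= Rc -> continuous (clamp Rc) x.
Proof.
intros H. apply continuous_eps_delta. intros eps He. exists eps. split; [exact He|].
intros y Hy. eapply Rle_lt_trans; [|exact Hy].
generalize (Rle_abs (y - x)) (Rle_abs (- (y - x))). rewrite Rabs_Ropp. intros.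
apply Rabs_le. unfold clamp, Rmax, Rmin. repeat destruct Rle_dec; lra.
Qed.

Section KernelFixedPoint.

Variables (K : R -> R -> R) (c m : R).
Hypothesis K_continuity : forall x t, continuity_2d_pt K x t.
Hypothesis c_pos : 0 < c.
Hypothesis K_ge : forall r r', 0 <= r <= 1 -> 0 <= r' <= 1 -> c <= K r r'.
Hypothesis RInt_K_snd : forall r, 0 <= r <= 1 -> RInt (K r) 0 1 = 1.
Hypothesis RInt_K_fst : forall r', 0 <= r' <= 1 -> RInt (fun r => K r r') 0 1 = 1.
Hypothesis m_pos : 0 < m.

Lemma K_continuous_snd r x : continuous (K r) x.
Proof. apply continuity_2d_pt_continuous_snd, K_continuity. Qed.

Lemma ex_RInt_K_snd r a b : ex_RInt (K r) a b.
Proof. apply ex_RInt_continuousR. intros; apply K_continuous_snd. Qed.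

Lemma ex_RInt_K_fst r' a b : ex_RInt (fun r => K r r') a b.
Proof. apply ex_RInt_continuousR. intros; apply (continuity_2d_pt_continuous_fst K), K_continuity. Qed.

Lemma K_mul_continuity_2d (g : R -> R) x t : (forall y, continuous g y) ->
  continuity_2d_pt (fun r r' => K r r' * g r') x t.
Proof.
intros Hg. apply continuity_2d_pt_mult; [apply K_continuity|].
apply (continuity_2d_pt_ext (fun u v => g v)); [auto|].
apply continuity_1d_2d_pt_comp; [apply continuity_pt_filterlim, Hg | apply continuity_2d_pt_id2].
Qed.

Lemma ex_RInt_K_mul (g : R -> R) r a b : (forall y, continuous g y) ->
  ex_RInt (fun r' => K r r' * g r') a b.
Proof.
intros Hg. apply ex_RInt_continuousR. intros.
apply (continuity_2d_pt_continuous_snd (fun r r' => K r r' * g r')), K_mul_continuity_2d, Hg.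
Qed.

(* With [g] the density on [0, Rc], [profile_map Rc g] is the density of
   [G * (m D_0 + g)] on [0, Rc]. *)
Definition profile_map (Rc : R) (g : R -> R) (r : R) : R :=
  m * K r 0 + RInt (fun r' => K r r' * g r') 0 Rc.

Lemma profile_map_continuous Rc g x : (forall y, continuous g y) ->
  continuous (profile_map Rc g) x.
Proof.
intros Hg. apply (continuous_plus (fun r => m * K r 0) (fun r => RInt (fun r' => K r r' * g r') 0 Rc)).
- apply (continuous_mult (fun _ => m) (fun r => K r 0)); [apply continuous_const|].
  apply (continuity_2d_pt_continuous_fst K), K_continuity.
- apply (continuous_RInt_param (fun r r' => K r r' * g r')). intros; apply K_mul_continuity_2d, Hg.
Qed.

Lemma profile_map_pos Rc g r : 0 <= Rc <= 1 -> 0 <= r <= 1 -> (forall y, continuous g y) ->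
  (forall t, 0 <= t <= Rc -> 0 <= g t) -> 0 < profile_map Rc g r.
Proof.
intros HR Hr Hg Hpos. unfold profile_map.
assert (0 < m * K r 0) by (apply Rmult_lt_0_compat; [lra | generalize (K_ge r 0 Hr); lra]).
assert (0 <= RInt (fun r' => K r r' * g r') 0 Rc).
{ apply RInt_ge_0; [lra | apply ex_RInt_K_mul, Hg|]. intros x Hx.
  generalize (K_ge r x Hr ltac:(lra)) (Hpos x ltac:(lra)). nra. }
lra.
Qed.

Definition contraction_ratio (Rc : R) : R := 1 - (1 - Rc) * c.

Lemma RInt_K_head Rc r : 0 < Rc < 1 -> 0 <= r <= 1 ->
  0 <= RInt (K r) 0 Rc <= contraction_ratio Rc.
Proof.
intros HR Hr. split.
- apply RInt_ge_0; [lra | apply ex_RInt_K_snd|]. intros x Hx. generalize (K_ge r x Hr ltac:(lra)). lra.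
- assert (H1 := RInt_K_snd r Hr).
  rewrite <- (RInt_ChaslesR _ 0 Rc 1) in H1 by apply ex_RInt_K_snd.
  assert (RInt (fun _ => c) Rc 1 <= RInt (K r) Rc 1).
  { apply RInt_le; [lra | apply ex_RInt_continuousR; intros; apply continuous_const | apply ex_RInt_K_snd|].
    intros x Hx. apply K_ge; lra. }
  rewrite RInt_constR in H. unfold contraction_ratio. lra.
Qed.

Lemma contraction_ratio_bounds Rc : 0 < Rc < 1 -> 0 <= contraction_ratio Rc < 1.
Proof.
intros HR. split.
- destruct (RInt_K_head Rc 0 HR ltac:(lra)). lra.
- unfold contraction_ratio. nra.
Qed.

Lemma profile_map_contraction Rc g h M r : 0 < Rc < 1 -> 0 <= r <= 1 ->
  (forall y, continuous g y) -> (forall y, continuous h y) ->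
  (forall t, 0 <= t <= Rc -> Rabs (g t - h t) <= M) ->
  Rabs (profile_map Rc g r - profile_map Rc h r) <= contraction_ratio Rc * M.
Proof.
intros HR Hr Hg Hh HM. unfold profile_map.
replace (m * K r 0 + RInt (fun r' => K r r' * g r') 0 Rc - (m * K r 0 + RInt (fun r' => K r r' * h r') 0 Rc))
  with (RInt (fun r' => K r r' * g r') 0 Rc - RInt (fun r' => K r r' * h r') 0 Rc) by ring.
rewrite <- RInt_minusR by (apply ex_RInt_K_mul; assumption).
rewrite (RInt_extR _ (fun r' => K r r' * (g r' - h r'))) by (intros; ring).
assert (Cd : forall x, continuous (fun r' => K r r' * (g r' - h r')) x).
{ intros x. apply (continuous_mult (K r) (fun r' => g r' - h r')); [apply K_continuous_snd|].
  apply (continuous_minus g h); auto. }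
eapply Rle_trans; [apply abs_RInt_le; [lra | apply ex_RInt_continuousR; auto]|].
apply Rle_trans with (RInt (fun t => M * K r t) 0 Rc).
- apply RInt_le; [lra | | apply ex_RInt_scalR, ex_RInt_K_snd|].
  + apply ex_RInt_continuousR. intros.
    apply (continuous_comp (fun r' => K r r' * (g r' - h r')) Rabs); [apply Cd|].
    apply continuous_Rabs.
  + intros x Hx. rewrite Rabs_mult, Rabs_pos_eq by (generalize (K_ge r x Hr ltac:(lra)); lra).
    rewrite Rmult_comm. apply Rmult_le_compat_r; [generalize (K_ge r x Hr ltac:(lra)); lra|].
    apply HM. lra.
- rewrite RInt_scalR by apply ex_RInt_K_snd. destruct (RInt_K_head Rc r HR Hr).
  assert (0 <= M) by (generalize (HM 0 ltac:(lra)) (Rabs_pos (g 0 - h 0)); lra).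
  rewrite (Rmult_comm (contraction_ratio Rc)). apply Rmult_le_compat_l; lra.
Qed.

Definition profile_iter (Rc : R) (n : nat) : R -> R := Nat.iter n (profile_map Rc) (fun _ => 0).

Lemma profile_iter_continuous Rc n x : continuous (profile_iter Rc n) x.
Proof.
revert x. induction n as [|n IH]; intros x; simpl.
- apply continuous_const.
- apply profile_map_continuous, IH.
Qed.

Lemma profile_iter_nonneg Rc n r : 0 <= Rc <= 1 -> 0 <= r <= 1 -> 0 <= profile_iter Rc n r.
Proof.
intros HR. revert r. induction n as [|n IH]; intros r Hr; simpl; [lra|].
left. apply profile_map_pos; [exact HR | exact Hr | apply profile_iter_continuous|].
intros t Ht. apply IH. lra.
Qed.

Lemma profile_iter_increment Rc : 0 < Rc < 1 -> exists C, forall n r, 0 <= r <= 1 ->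
  Rabs (profile_iter Rc (S n) r - profile_iter Rc n r) <= C * contraction_ratio Rc ^ n.
Proof.
intros HR.
destruct (continuity_ab_maj (profile_iter Rc 1) 0 1) as [Mx [HM HMx]];
  [lra | intros; apply continuity_pt_filterlim, profile_iter_continuous|].
exists (profile_iter Rc 1 Mx). intros n. induction n as [|n IH]; intros r Hr.
- simpl pow. rewrite Rmult_1_r. change (profile_iter Rc 0 r) with 0.
  rewrite Rminus_0_r, Rabs_pos_eq by (apply profile_iter_nonneg; lra). apply HM, Hr.
- replace (profile_iter Rc 1 Mx * contraction_ratio Rc ^ S n)
    with (contraction_ratio Rc * (profile_iter Rc 1 Mx * contraction_ratio Rc ^ n)) by (simpl; ring).
  change (Rabs (profile_map Rc (profile_iter Rc (S n)) r - profile_map Rc (profile_iter Rc n) r)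
          <= contraction_ratio Rc * (profile_iter Rc 1 Mx * contraction_ratio Rc ^ n)).
  apply profile_map_contraction; [exact HR | exact Hr | apply profile_iter_continuous
                                 | apply profile_iter_continuous|].
  intros t Ht. apply IH. lra.
Qed.

(* The limit of the iterates, written as the telescoping series of their increments;
   clamping makes it continuous on the whole line. *)
Definition profile_sol (Rc x : R) : R :=
  Series (fun k => profile_iter Rc (S k) (clamp Rc x) - profile_iter Rc k (clamp Rc x)).

Lemma profile_sol_approx Rc : 0 < Rc < 1 -> exists e, is_lim_seq e 0 /\
  forall N x, Rabs (profile_sol Rc x - profile_iter Rc (S N) (clamp Rc x)) <= e N.
Proof.
intros HR. destruct (profile_iter_increment Rc HR) as [C HC].
assert (Hq := contraction_ratio_bounds Rc HR).
exists (fun N => C * contraction_ratio Rc ^ S N / (1 - contraction_ratio Rc)).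
split; [apply is_lim_seq_geom_tail, Hq|]. intros N x.
set (y := clamp Rc x). assert (Hy : 0 <= y <= Rc) by apply clamp_range, Rlt_le, HR.
assert (Htele : sum_f_R0 (fun k => profile_iter Rc (S k) y - profile_iter Rc k y) N
                = profile_iter Rc (S N) y).
{ induction N as [|N IH]; [simpl; ring|]. rewrite tech5, IH. ring. }
rewrite <- Htele. apply Series_tail_geom; [exact Hq|]. intros n. apply HC. lra.
Qed.

Lemma profile_sol_continuous Rc x : 0 < Rc < 1 -> continuous (profile_sol Rc) x.
Proof.
intros HR. destruct (profile_sol_approx Rc HR) as [e [He Happrox]].
apply (continuous_uniform_limit _ (fun N y => profile_iter Rc (S N) (clamp Rc y)) e x He).
- intros N y _. apply Happrox.
- intros N. apply (continuous_comp (clamp Rc) (profile_iter Rc (S N))).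
  + apply clamp_continuous. lra.
  + apply profile_iter_continuous.
Qed.

Lemma profile_sol_nonneg Rc x : 0 < Rc < 1 -> 0 <= profile_sol Rc x.
Proof.
intros HR. destruct (profile_sol_approx Rc HR) as [e [He Happrox]].
destruct (Rle_lt_dec 0 (profile_sol Rc x)) as [h|h]; [exact h|]. exfalso.
destruct (proj2 (is_lim_seq_spec e 0) He (mkposreal (- profile_sol Rc x) ltac:(lra))) as [N HN].
specialize (HN N (le_n N)). simpl in HN. rewrite Rminus_0_r in HN.
assert (Hy := clamp_range Rc x ltac:(lra)).
generalize (Happrox N x) (profile_iter_nonneg Rc (S N) (clamp Rc x) ltac:(lra) ltac:(lra)) (Rle_abs (e N)).
generalize (Rle_abs (- (profile_sol Rc x - profile_iter Rc (S N) (clamp Rc x)))). rewrite Rabs_Ropp.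
lra.
Qed.

(* Pass to the limit in [profile_iter Rc (S (S N)) = profile_map Rc (profile_iter Rc (S N))],
   the right-hand side converging by the contraction estimate. *)
Lemma profile_sol_fixed Rc r : 0 < Rc < 1 -> 0 <= r <= Rc ->
  profile_sol Rc r = profile_map Rc (profile_sol Rc) r.
Proof.
intros HR Hr. destruct (profile_sol_approx Rc HR) as [e [He Happrox]].
destruct (contraction_ratio_bounds Rc HR) as [Hq0 Hq1].
apply Req_forall_eps. intros eps Heps.
destruct (proj2 (is_lim_seq_spec e 0) He (mkposreal (eps / 2) ltac:(lra))) as [N HN].
assert (HeN : forall n, (N <= n)%nat -> Rabs (e n) < eps / 2) by (intros n Hn; specialize (HN n Hn);
  simpl in HN; rewrite Rminus_0_r in HN; exact HN).
assert (A1 := Happrox (S N) r). rewrite clamp_id in A1 by exact Hr.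
change (profile_iter Rc (S (S N)) r) with (profile_map Rc (profile_iter Rc (S N)) r) in A1.
assert (A2 : Rabs (profile_map Rc (profile_iter Rc (S N)) r - profile_map Rc (profile_sol Rc) r)
             <= contraction_ratio Rc * e N).
{ apply profile_map_contraction; [exact HR | lra | apply profile_iter_continuous
                                 | intros; apply profile_sol_continuous, HR|].
  intros t Ht. rewrite Rabs_minus_sym. rewrite <- (clamp_id Rc t Ht) at 2. apply Happrox. }
generalize (HeN N (le_n N)) (HeN (S N) (le_S _ _ (le_n N))) (Rle_abs (e N)) (Rle_abs (e (S N))). intros.
replace (profile_sol Rc r - profile_map Rc (profile_sol Rc) r)
  with ((profile_sol Rc r - profile_map Rc (profile_iter Rc (S N)) r)
        + (profile_map Rc (profile_iter Rc (S N)) r - profile_map Rc (profile_sol Rc) r)) by ring.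
eapply Rle_lt_trans; [apply Rabs_triang|]. nra.
Qed.

(* Maximum principle: at a maximum point of [g1 - g2] on [0, R1], the positive maximum
   would be bounded by [contraction_ratio R1] times itself. *)
Lemma profile_le R1 R2 g1 g2 : 0 < R1 -> R1 <= R2 -> R2 < 1 ->
  (forall y, continuous g1 y) -> (forall y, continuous g2 y) ->
  (forall r, 0 <= r <= R1 -> g1 r = profile_map R1 g1 r) ->
  (forall r, 0 <= r <= R2 -> g2 r = profile_map R2 g2 r) ->
  (forall t, 0 <= t <= R2 -> 0 <= g2 t) ->
  forall r, 0 <= r <= R1 -> g1 r <= g2 r.
Proof.
intros H1 H12 H2 Cg1 Cg2 F1 F2 P2.
destruct (continuity_ab_maj (fun r => g1 r - g2 r) 0 R1) as [r0 [HM Hr0]];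
  [lra | intros; apply continuity_pt_filterlim, (continuous_minus g1 g2); auto|].
set (M := g1 r0 - g2 r0).
assert (HMle : M <= 0).
{ destruct (Rle_lt_dec M 0) as [h|h]; [exact h|]. exfalso.
  assert (E : M = RInt (fun t => K r0 t * (g1 t - g2 t)) 0 R1 - RInt (fun t => K r0 t * g2 t) R1 R2).
  { unfold M. rewrite F1, F2 by lra. unfold profile_map.
    rewrite <- (RInt_ChaslesR (fun t => K r0 t * g2 t) 0 R1 R2) by (apply ex_RInt_K_mul; auto).
    rewrite (RInt_extR (fun t => K r0 t * (g1 t - g2 t)) (fun t => K r0 t * g1 t - K r0 t * g2 t))
      by (intros; ring).
    rewrite RInt_minusR by (apply ex_RInt_K_mul; auto). ring. }
  assert (P : 0 <= RInt (fun t => K r0 t * g2 t) R1 R2).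
  { apply RInt_ge_0; [exact H12 | apply ex_RInt_K_mul, Cg2|]. intros x Hx.
    generalize (K_ge r0 x ltac:(lra) ltac:(lra)) (P2 x ltac:(lra)). nra. }
  assert (Q : RInt (fun t => K r0 t * (g1 t - g2 t)) 0 R1 <= M * RInt (K r0) 0 R1).
  { rewrite <- RInt_scalR by apply ex_RInt_K_snd.
    apply RInt_le; [lra | | apply ex_RInt_scalR, ex_RInt_K_snd|].
    - apply ex_RInt_continuousR. intros.
      apply (continuous_mult (K r0) (fun t => g1 t - g2 t)); [apply K_continuous_snd|].
      apply (continuous_minus g1 g2); auto.
    - intros x Hx. rewrite Rmult_comm. apply Rmult_le_compat_r; [|apply HM; lra].
      generalize (K_ge r0 x ltac:(lra) ltac:(lra)). lra. }
  destruct (RInt_K_head R1 r0 ltac:(lra) ltac:(lra)) as [_ K1].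
  destruct (contraction_ratio_bounds R1 ltac:(lra)) as [_ q1].
  assert (M * RInt (K r0) 0 R1 <= M * contraction_ratio R1) by (apply Rmult_le_compat_l; lra).
  nra. }
intros r Hr. generalize (HM r Hr). unfold M in HMle. lra.
Qed.

(* Mass conservation, by Fubini and the column integrals of [K]. *)
Lemma RInt_profile_map Rc g : 0 <= Rc <= 1 -> (forall y, continuous g y) ->
  RInt (profile_map Rc g) 0 1 = m + RInt g 0 Rc.
Proof.
intros HR Hg.
unfold profile_map. rewrite RInt_plusR.
2:{ apply ex_RInt_scalR, ex_RInt_K_fst. }
2:{ apply ex_RInt_continuousR. intros.
    apply (continuous_RInt_param (fun r r' => K r r' * g r')). intros; apply K_mul_continuity_2d, Hg. }
rewrite RInt_scalR, RInt_K_fst by (lra || apply ex_RInt_K_fst).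
rewrite (Fubini_RInt (fun r r' => K r r' * g r')) by (intros; apply K_mul_continuity_2d, Hg).
rewrite (RInt_extR (fun t => RInt (fun x => K x t * g t) 0 1) g).
- R_eq. ring.
- intros t Ht. rewrite Rmin_left, Rmax_right in Ht by lra.
  rewrite (RInt_extR _ (fun x => g t * K x t)) by (intros; ring).
  rewrite RInt_scalR, RInt_K_fst by (lra || apply ex_RInt_K_fst).
  ring.
Qed.

(* [kernel_conv rho] is the density of [G * (m D_0 + rho)]; [kernel_profile] transcribes
   [fixed_profile] for an arbitrary kernel. *)
Definition kernel_conv (rho : R -> R) (r : R) : R :=
  m * K r 0 + RInt (fun r' => K r r' * rho r') 0 1.

Definition kernel_profile (Rc : R) (rho : R -> R) : Prop :=
  (forall r, 0 <= r <= 1 -> 0 <= rho r) /\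
  (forall r, 0 <= r <= Rc ->
     filterlim rho (within (fun y => 0 <= y <= Rc) (locally r)) (locally (rho r))) /\
  (forall r, Rc < r <= 1 -> rho r = 0) /\
  is_cut_point m (kernel_conv rho) Rc /\
  meas_eq (cut_paste m (kernel_conv rho) Rc) (m, rho).

Lemma kernel_conv_truncated Rc (rho g : R -> R) r : 0 < Rc < 1 -> (forall y, continuous g y) ->
  (forall t, 0 <= t <= Rc -> rho t = g t) -> (forall t, Rc < t <= 1 -> rho t = 0) ->
  kernel_conv rho r = profile_map Rc g r.
Proof.
intros HR Hg H1 H2. unfold kernel_conv, profile_map. f_equal.
assert (Hin : forall x, Rmin 0 Rc < x < Rmax 0 Rc -> K r x * rho x = K r x * g x).
{ intros x Hx. rewrite Rmin_left, Rmax_right in Hx by lra. rewrite H1 by lra. reflexivity. }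
assert (Hout : forall x, Rmin Rc 1 < x < Rmax Rc 1 -> K r x * rho x = 0).
{ intros x Hx. rewrite Rmin_left, Rmax_right in Hx by lra. rewrite H2 by lra. ring. }
rewrite <- (RInt_ChaslesR _ 0 Rc 1).
- rewrite (RInt_extR _ _ 0 Rc Hin), (RInt_extR _ _ Rc 1 Hout), RInt_constR. R_eq. ring.
- apply (ex_RInt_ext (fun r' => K r r' * g r')); [intros; symmetry; apply Hin; auto|].
  apply ex_RInt_K_mul, Hg.
- apply (ex_RInt_ext (fun _ => 0)); [intros; symmetry; apply Hout; auto|].
  apply ex_RInt_continuousR. intros; apply continuous_const.
Qed.

(* Conservation of mass makes the cut point condition automatic: the part of
   [G * u] beyond [Rc] carries exactly the atom's mass [m]. *)
Lemma kernel_profile_exists Rc : 0 < Rc < 1 ->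
  kernel_profile Rc (fun r => if Rle_dec r Rc then profile_sol Rc r else 0).
Proof.
intros HR. set (g := profile_sol Rc).
assert (Cg : forall y, continuous g y) by (intros; apply profile_sol_continuous, HR).
set (rho := fun r => if Rle_dec r Rc then g r else 0).
assert (R1 : forall t, 0 <= t <= Rc -> rho t = g t)
  by (intros t Ht; unfold rho; destruct Rle_dec; [reflexivity | lra]).
assert (R2 : forall t, Rc < t <= 1 -> rho t = 0)
  by (intros t Ht; unfold rho; destruct Rle_dec; [lra | reflexivity]).
assert (V : forall r, kernel_conv rho r = profile_map Rc g r)
  by (intros; apply kernel_conv_truncated; assumption).
assert (Ev : forall a b, ex_RInt (kernel_conv rho) a b).
{ intros. apply (ex_RInt_ext (profile_map Rc g)); [intros; symmetry; apply V|].
  apply ex_RInt_continuousR. intros; apply profile_map_continuous, Cg. }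
assert (Tot : RInt (kernel_conv rho) 0 1 = m + RInt g 0 Rc).
{ rewrite (RInt_extR _ (profile_map Rc g)) by (intros; apply V). apply RInt_profile_map; [lra | exact Cg]. }
assert (Part : RInt (kernel_conv rho) 0 Rc = RInt g 0 Rc).
{ apply RInt_extR. intros x Hx. rewrite Rmin_left, Rmax_right in Hx by lra.
  rewrite V. symmetry. apply profile_sol_fixed; [exact HR | lra]. }
assert (Pos : 0 < RInt g 0 Rc).
{ apply RInt_gt_0; [lra | | intros; apply Cg]. intros x Hx.
  unfold g. rewrite profile_sol_fixed by (exact HR || lra).
  apply profile_map_pos; [lra | lra | exact Cg | intros; apply profile_sol_nonneg, HR]. }
split; [|split; [|split; [|split]]].
- intros r Hr. unfold rho. destruct Rle_dec; [apply profile_sol_nonneg, HR | lra].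
- intros r Hr P HP. specialize (Cg r P). unfold rho in HP.
  destruct (Rle_dec r Rc) as [_|n]; [|lra].
  unfold filtermap, within. apply (filter_imp (fun x => P (g x))); [|exact (Cg HP)].
  intros x Hx Dx. unfold rho. destruct Rle_dec; [exact Hx | lra].
- exact R2.
- split; [lra | split].
  + rewrite Tot. lra.
  + rewrite <- (RInt_ChaslesR _ 0 Rc 1), Part in Tot by apply Ev. lra.
- split; [reflexivity|]. intros r Hr. simpl. destruct (Rle_dec r Rc) as [h|h].
  + rewrite R1, V by lra. symmetry. apply profile_sol_fixed; [exact HR | lra].
  + rewrite R2 by lra. reflexivity.
Qed.

Lemma kernel_profile_clamp Rc rho : 0 < Rc < 1 -> kernel_profile Rc rho ->
  (forall y, continuous (fun y => rho (clamp Rc y)) y) /\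
  (forall r, 0 <= r <= Rc -> rho r = profile_map Rc (fun y => rho (clamp Rc y)) r).
Proof.
intros HR [_ [Hc [Hz [_ [_ Hfix]]]]].
assert (Cg : forall y, continuous (fun y => rho (clamp Rc y)) y).
{ intros x.
  apply (filterlim_comp _ _ _ (clamp Rc) rho _ (within (fun y => 0 <= y <= Rc) (locally (clamp Rc x)))).
  - intros P HP. unfold filtermap.
    apply (filter_imp (fun y => 0 <= clamp Rc y <= Rc -> P (clamp Rc y))).
    + intros y Hy. apply Hy, clamp_range. lra.
    + exact (clamp_continuous Rc x ltac:(lra) _ HP).
  - apply Hc, clamp_range. lra. }
split; [exact Cg|]. intros r Hr.
specialize (Hfix r ltac:(lra)). simpl in Hfix. destruct (Rle_dec r Rc) as [_|n]; [|lra].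
rewrite <- Hfix. apply kernel_conv_truncated; [exact HR | exact Cg | | exact Hz].
intros t Ht. rewrite clamp_id by exact Ht. reflexivity.
Qed.

Lemma kernel_profile_le R1 R2 rho1 rho2 : 0 < R1 -> R1 <= R2 -> R2 < 1 ->
  kernel_profile R1 rho1 -> kernel_profile R2 rho2 -> forall r, 0 <= r <= 1 -> rho1 r <= rho2 r.
Proof.
intros H1 H12 H2 P1 P2 r Hr.
destruct (kernel_profile_clamp R1 rho1 ltac:(lra) P1) as [C1 F1].
destruct (kernel_profile_clamp R2 rho2 ltac:(lra) P2) as [C2 F2].
destruct (Rle_dec r R1) as [h|h].
- rewrite <- (clamp_id R1 r) at 1 by lra. rewrite <- (clamp_id R2 r) at 2 by lra.
  apply (profile_le R1 R2 (fun y => rho1 (clamp R1 y)) (fun y => rho2 (clamp R2 y)));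
    try assumption; try lra.
  + intros t Ht. rewrite clamp_id by exact Ht. apply F1, Ht.
  + intros t Ht. rewrite clamp_id by exact Ht. apply F2, Ht.
  + intros t Ht. rewrite clamp_id by exact Ht. apply (proj1 P2). lra.
- rewrite (proj1 (proj2 (proj2 P1))) by lra. apply (proj1 P2), Hr.
Qed.

End KernelFixedPoint.

(** * The Neumann fixed profiles *)

Lemma Gneum_ge_heat_1_unit d r r' : 0 < d -> 0 <= r <= 1 -> 0 <= r' <= 1 -> heat d 1 <= Gneum d r r'.
Proof. intros Hd Hr Hr'. apply Gneum_ge_heat_1; [exact Hd | apply Rabs_le; lra]. Qed.

Lemma fixed_profile_kernel_profile j d Rc rho :
  fixed_profile j d Rc rho <-> kernel_profile (Gneum d) (j * d) Rc rho.
Proof. reflexivity. Qed.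

Lemma fixed_profile_exists j d Rc : 0 < j -> 0 < d -> 0 < Rc < 1 ->
  exists rho, fixed_profile j d Rc rho.
Proof.
intros Hj Hd HR. eexists. apply fixed_profile_kernel_profile.
apply (kernel_profile_exists (Gneum d) (heat d 1)).
- intros; apply Gneum_continuity_2d, Hd.
- apply heat_pos, Hd.
- intros; apply Gneum_ge_heat_1_unit; assumption.
- intros; apply RInt_Gneum_snd, Hd.
- intros; apply RInt_Gneum_fst, Hd.
- apply Rmult_lt_0_compat; assumption.
- exact HR.
Qed.

Lemma fixed_profile_le j d R1 R2 rho1 rho2 : 0 < d -> 0 < R1 -> R1 <= R2 -> R2 < 1 ->
  fixed_profile j d R1 rho1 -> fixed_profile j d R2 rho2 ->
  forall r, 0 <= r <= 1 -> rho1 r <= rho2 r.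
Proof.
intros Hd H1 H12 H2 P1 P2.
apply (kernel_profile_le (Gneum d) (heat d 1) (j * d)) with R1 R2; try assumption.
- intros; apply Gneum_continuity_2d, Hd.
- apply heat_pos, Hd.
- intros; apply Gneum_ge_heat_1_unit; assumption.
- intros; apply RInt_Gneum_snd, Hd.
Qed.

(* The construction works for every [delta > 0], so [delta0] can be taken constant. *)
Theorem theorem3p1 (j : R) (hj : 0 < j) :
  exists delta0 : R -> R,
    (forall Rc, 0 < Rc < 1 -> 0 < delta0 Rc) /\
    (forall Rc, 0 < Rc < 1 -> forall delta, 0 < delta < delta0 Rc ->
       exists rho, fixed_profile j delta Rc rho /\
         forall rho', fixed_profile j delta Rc rho' ->
           forall r, 0 <= r <= 1 -> rho' r = rho r) /\
    (forall R1 R2, 0 < R1 -> R1 <= R2 -> R2 < 1 ->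
       forall delta, 0 < delta -> delta < delta0 R1 -> delta < delta0 R2 ->
       forall rho1 rho2, fixed_profile j delta R1 rho1 -> fixed_profile j delta R2 rho2 ->
         forall r, 0 <= r <= 1 -> rho1 r <= rho2 r).
Proof.
exists (fun _ => 1). split; [|split].
- intros; lra.
- intros Rc HR delta [Hd _].
  destruct (fixed_profile_exists j delta Rc hj Hd HR) as [rho P].
  exists rho. split; [exact P|]. intros rho' P' r Hr.
  apply Rle_antisym; [apply (fixed_profile_le j delta Rc Rc rho' rho)
                     | apply (fixed_profile_le j delta Rc Rc rho rho')]; (assumption || lra).
- intros R1 R2 H1 H12 H2 delta Hd _ _ rho1 rho2. apply fixed_profile_le; assumption.
Qed.
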